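(* Let $(X,\widetilde{\tau}_X,\mathfrak{a}_E,E)$ and $(Y,\widetilde{\tau}_Y,\mathfrak{b}_K,K)$ be soft aura topological spaces and $f_{up}$ a soft mapping from $(X,E)$ to $(Y,K)$. With the generalized open-set classes defined using $\mathrm{cl}_{\mathfrak{a}}^{\infty}$ in place of $\mathrm{cl}_{\mathfrak{a}}$, $f_{up}$ is soft $\mathfrak{a}$-$\alpha$-continuous (w.r.t. $\mathrm{cl}_{\mathfrak{a}}^{\infty}$) if and only if it is both soft $\mathfrak{a}$-semi-continuous and soft $\mathfrak{a}$-pre-continuous (w.r.t. $\mathrm{cl}_{\mathfrak{a}}^{\infty}$).
   Context: For a nonempty set $X$ and nonempty parameter set $E$, a soft set is a map $F:E\to\mathcal{P}(X)$, written $(F,E)$; $\mathrm{SS}(X,E)$ denotes all soft sets; $\sqsubseteq$, $\sqcup$ are parameterwise. A soft topology is a subfamily of $\mathrm{SS}(X,E)$ containing the soft sets with all values $\emptyset$ and all values $X$, closed under arbitrary soft unions and finite soft intersections. A soft scope function is a map $\mathfrak{a}_E:X\to\widetilde{\tau}_X$ with $x\in\mathfrak{a}_E(x)(e)$ for all $x,e$; $(X,\widetilde{\tau}_X,\mathfrak{a}_E,E)$ is a soft aura topological space (similarly for $Y$ with $\mathfrak{b}_K$). $\mathrm{cl}_{\mathfrak{a}}(G,E)(e)=\{x:\mathfrak{a}_E(x)(e)\cap G(e)\neq\emptyset\}$, $\mathrm{int}_{\mathfrak{a}}(G,E)(e)=\{x:\mathfrak{a}_E(x)(e)\subseteq G(e)\}$;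 $\mathrm{int}_{\mathfrak{b}}$ analogously on $Y$; $(V,K)$ is soft $\mathfrak{b}$-open if $\mathrm{int}_{\mathfrak{b}}(V,K)=(V,K)$. $\mathrm{cl}_{\mathfrak{a}}^{\infty}$ is the stable value of the transfinite iterates $\mathrm{cl}_{\mathfrak{a}}^0=\mathrm{id}$, $\mathrm{cl}_{\mathfrak{a}}^{\alpha+1}=\mathrm{cl}_{\mathfrak{a}}\circ\mathrm{cl}_{\mathfrak{a}}^{\alpha}$, $\mathrm{cl}_{\mathfrak{a}}^{\lambda}=\bigsqcup_{\alpha<\lambda}\mathrm{cl}_{\mathfrak{a}}^{\alpha}$ at limits; it is a soft Kuratowski closure operator. W.r.t. $\mathrm{cl}_{\mathfrak{a}}^{\infty}$: $(G,E)$ is soft $\mathfrak{a}$-semi-open if $(G,E)\sqsubseteq\mathrm{cl}_{\mathfrak{a}}^{\infty}(\mathrm{int}_{\mathfrak{a}}(G,E))$; pre-open if $(G,E)\sqsubseteq\mathrm{int}_{\mathfrak{a}}(\mathrm{cl}_{\mathfrak{a}}^{\infty}(G,E))$; $\alpha$-open if $(G,E)\sqsubseteq\mathrm{int}_{\mathfrak{a}}(\mathrm{cl}_{\mathfrak{a}}^{\infty}(\mathrm{int}_{\mathfrak{a}}(G,E)))$. A soft mapping $f_{up}=(u,p)$ has $u:X\to Y$, $p:E\to K$, $f_{up}^{-1}(V,K)(e)=u^{-1}(V(p(e)))$. $f_{up}$ is soft $\mathfrak{a}$-semi- (resp. pre-, $\alpha$-) continuous if $f_{up}^{-1}(V,K)$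 is soft $\mathfrak{a}$-semi-open (resp. pre-open, $\alpha$-open) for every soft $\mathfrak{b}$-open $(V,K)$. *)

Set Implicit Arguments.

Section Soft.
Variables (X E : Type).

Definition soft := E -> X -> Prop.

Definition soft_sub (F G : soft) : Prop := forall e x, F e x -> G e x.
Definition soft_null : soft := fun _ _ => False.
Definition soft_abs : soft := fun _ _ => True.
Definition soft_inter (F G : soft) : soft := fun e x => F e x /\ G e x.
Definition soft_bigunion (Fam : soft -> Prop) : soft :=
  fun e x => exists F, Fam F /\ F e x.
Definition soft_bigcap (Fam : soft -> Prop) : soft :=
  fun e x => forall F, Fam F -> F e x.

Definition is_soft_topology (tau : soft -> Prop) : Prop :=
  tau soft_null /\ tau soft_abs /\
  (forall Fam : soft -> Prop, (forall F, Fam F -> tau F) -> tau (soft_bigunion Fam)) /\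
  (forall F G, tau F -> tau G -> tau (soft_inter F G)).

Definition is_soft_scope (tau : soft -> Prop) (a : X -> soft) : Prop :=
  forall x, tau (a x) /\ forall e, a x e x.

Definition cl_a (a : X -> soft) (G : soft) : soft :=
  fun e x => exists y, a x e y /\ G e y.
Definition int_a (a : X -> soft) (G : soft) : soft :=
  fun e x => forall y, a x e y -> G e y.

(* cl_a^infty: the stable value of the transfinite iterates of cl_a,
   i.e. the smallest soft set containing G that is closed under cl_a
   (cl_a is monotone and extensive, so the transfinite iteration stabilises
   exactly at this least fixed point above G). *)
Definition cl_inf (a : X -> soft) (G : soft) : soft :=
  soft_bigcap (fun H => soft_sub G H /\ soft_sub (cl_a a H) H).

Definition soft_a_open (a : X -> soft) (G : soft) : Prop := int_a a G = G.

Definition soft_a_semiopen (a : X -> soft) (G : soft) : Prop :=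
  soft_sub G (cl_inf a (int_a a G)).
Definition soft_a_preopen (a : X -> soft) (G : soft) : Prop :=
  soft_sub G (int_a a (cl_inf a G)).
Definition soft_a_alphaopen (a : X -> soft) (G : soft) : Prop :=
  soft_sub G (int_a a (cl_inf a (int_a a G))).
End Soft.

(* Soft mapping f_up = (u,p) : (X,E) -> (Y,K), preimage of (V,K). *)
Definition soft_preimage {X Y E K : Type} (u : X -> Y) (p : E -> K)
  (V : soft Y K) : soft X E := fun e x => V (p e) (u x).

Definition soft_semi_cont {X Y E K : Type} (a : X -> soft X E) (b : Y -> soft Y K)
  (u : X -> Y) (p : E -> K) : Prop :=
  forall V, soft_a_open b V -> soft_a_semiopen a (soft_preimage u p V).
Definition soft_pre_cont {X Y E K : Type} (a : X -> soft X E) (b : Y -> soft Y K)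
  (u : X -> Y) (p : E -> K) : Prop :=
  forall V, soft_a_open b V -> soft_a_preopen a (soft_preimage u p V).
Definition soft_alpha_cont {X Y E K : Type} (a : X -> soft X E) (b : Y -> soft Y K)
  (u : X -> Y) (p : E -> K) : Prop :=
  forall V, soft_a_open b V -> soft_a_alphaopen a (soft_preimage u p V).

(* The aura closure [cl_inf a] is a Kuratowski-style hull: extensive, monotone and
   idempotent, and the aura interior is monotone and, since [x] lies in its own scope,
   deflationary.  Then alpha-open gives semi-open and pre-open by dropping an outer
   interior or an inner one.  Conversely, semi-openness [G ⊑ cl∞(int G)] yields
   [cl∞ G ⊑ cl∞(int G)] by idempotence, so pre-openness [G ⊑ int(cl∞ G)] improves to
   [G ⊑ int(cl∞(int G))].  Continuity is the pointwise version over soft b-open sets. *)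

Section AuraOperators.
Variables (X E : Type) (a : X -> soft X E).

Lemma soft_sub_trans {F G H : soft X E} :
  soft_sub F G -> soft_sub G H -> soft_sub F H.
Proof. intros FG GH e x Fx. apply GH, FG, Fx. Qed.

Lemma cl_a_mono (G H : soft X E) : soft_sub G H -> soft_sub (cl_a a G) (cl_a a H).
Proof. intros GH e x [y [axy Gy]]. exists y. split; [exact axy | apply GH, Gy]. Qed.

Lemma int_a_mono (G H : soft X E) : soft_sub G H -> soft_sub (int_a a G) (int_a a H).
Proof. intros GH e x IGx y axy. apply GH, IGx, axy. Qed.

Lemma cl_inf_ext (G : soft X E) : soft_sub G (cl_inf a G).
Proof. intros e x Gx H [GH _]. apply GH, Gx. Qed.

Lemma cl_inf_min (G H : soft X E) :
  soft_sub G H -> soft_sub (cl_a a H) H -> soft_sub (cl_inf a G) H.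
Proof. intros GH clH e x clGx. apply clGx. split; assumption. Qed.

Lemma cl_inf_closed (G : soft X E) : soft_sub (cl_a a (cl_inf a G)) (cl_inf a G).
Proof.
  intros e x clx H [GH clH].
  apply clH. revert clx. apply cl_a_mono, cl_inf_min; assumption.
Qed.

Lemma cl_inf_sub (G H : soft X E) :
  soft_sub G (cl_inf a H) -> soft_sub (cl_inf a G) (cl_inf a H).
Proof. intros GH. apply cl_inf_min; [exact GH | apply cl_inf_closed]. Qed.

Lemma cl_inf_mono (G H : soft X E) :
  soft_sub G H -> soft_sub (cl_inf a G) (cl_inf a H).
Proof. intros GH. apply cl_inf_sub, (soft_sub_trans GH), cl_inf_ext. Qed.

Hypothesis a_refl : forall x e, a x e x.

Lemma int_a_sub (G : soft X E) : soft_sub (int_a a G) G.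
Proof. intros e x IGx. apply IGx, a_refl. Qed.

Lemma soft_a_alphaopen_iff (G : soft X E) :
  soft_a_alphaopen a G <-> soft_a_semiopen a G /\ soft_a_preopen a G.
Proof.
  unfold soft_a_alphaopen, soft_a_semiopen, soft_a_preopen. split.
  - intros alphaG. split.
    + apply (soft_sub_trans alphaG), int_a_sub.
    + apply (soft_sub_trans alphaG), int_a_mono, cl_inf_mono, int_a_sub.
  - intros [semiG preG].
    apply (soft_sub_trans preG), int_a_mono, cl_inf_sub, semiG.
Qed.

End AuraOperators.

Theorem theorem5p3 (X Y E K : Type)
  (hX : inhabited X) (hY : inhabited Y) (hE : inhabited E) (hK : inhabited K)
  (tauX : soft X E -> Prop) (tauY : soft Y K -> Prop)
  (a : X -> soft X E) (b : Y -> soft Y K)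
  (htX : is_soft_topology tauX) (htY : is_soft_topology tauY)
  (ha : is_soft_scope tauX a) (hb : is_soft_scope tauY b)
  (u : X -> Y) (p : E -> K) :
  soft_alpha_cont a b u p <-> (soft_semi_cont a b u p /\ soft_pre_cont a b u p).
Proof.
  assert (a_refl : forall x e, a x e x) by (intros x e; apply (proj2 (ha x))).
  unfold soft_alpha_cont, soft_semi_cont, soft_pre_cont. split.
  - intros alpha_cont.
    split; intros V openV; apply (soft_a_alphaopen_iff _ _ _ a_refl), alpha_cont, openV.
  - intros [semi_cont pre_cont] V openV.
    apply (soft_a_alphaopen_iff _ _ _ a_refl). split; [apply semi_cont | apply pre_cont]; exact openV.
Qed.
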